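(* Let $(P,\trianglerighteq)$ be a transitive relation and let $(P,\succ)$ be a poset minimally induced by $(P,\trianglerighteq)$. Then the width of $(P,\succ)$ equals the width of $(P,\trianglerighteq)$.
   Context: A transitive relation is a pair $(P,\trianglerighteq)$ with $\trianglerighteq\subseteq P\times P$ transitive (not necessarily irreflexive). Two elements $x,y$ are incomparable with respect to a relation $R$ if neither $(x,y)\in R$ nor $(y,x)\in R$; the width of a transitive relation (or poset) is the maximum size of a set of mutually incomparable elements. A poset is a pair $(P,\succ)$ with $\succ$ irreflexive and transitive. A poset $(P,\succ)$ is induced by $(P,\trianglerighteq)$ if $\succ\subseteq\trianglerighteq$; it is minimally induced if, for every pair $(x,y)\in\trianglerighteq\setminus\succ$, the relation $\succ\cup\{(x,y)\}$ does not generate a valid partial order, i.e. the directed graph on $P$ with edge set $\succ\cup\{(x,y)\}$ contains a directed cycle. *)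

From mathcomp Require Import all_boot.
Set Implicit Arguments. Unset Strict Implicit. Unset Printing Implicit Defensive.

Section Defs.
Variable P : finType.

Definition transitive_rel (R : rel P) : Prop :=
  forall x y z, R x y -> R y z -> R x z.

Definition is_poset (S : rel P) : Prop :=
  (forall x, ~~ S x x) /\ transitive_rel S.

Definition incomparable (R : rel P) (x y : P) : bool :=
  ~~ R x y && ~~ R y x.

Definition antichain (R : rel P) (A : {set P}) : bool :=
  [forall x in A, forall y in A, (x != y) ==> incomparable R x y].

Definition width (R : rel P) : nat :=
  \max_(A : {set P} | antichain R A) #|A|.

Definition has_dcycle (e : rel P) : Prop :=
  exists x (s : seq P), [/\ s != [::], path e x s & last x s = x].

Definition add_edge (S : rel P) (a b : P) : rel P :=
  fun x y => S x y || ((x == a) && (y == b)).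

Definition induced (S T : rel P) : Prop :=
  is_poset S /\ forall x y, S x y -> T x y.

Definition minimally_induced (S T : rel P) : Prop :=
  induced S T /\
  forall x y, T x y -> ~~ S x y -> has_dcycle (add_edge S x y).

End Defs.

(* Adding a T-edge (x, y) missing from S to the order S closes a directed
   cycle; since S is transitive, a cycle using the new edge forces y = x or
   S y x.  Hence two distinct T-comparable elements are already S-comparable,
   so S and T have the same antichains. *)
From mathcomp Require Import all_boot.

Set Implicit Arguments. Unset Strict Implicit. Unset Printing Implicit Defensive.

Section AddEdge.
Variables (P : finType) (S : rel P).
Hypothesis S_trans : transitive_rel S.

Definition reflc (x y : P) : bool := (x == y) || S x y.

Lemma reflc_trans x y z : reflc x y -> reflc y z -> reflc x z.
Proof.
rewrite /reflc => /orP[/eqP-> //|Sxy] /orP[/eqP<-|Syz]; first by rewrite Sxy orbT.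
by rewrite (S_trans Sxy Syz) orbT.
Qed.

Lemma reflc_refl x : reflc x x.
Proof. by rewrite /reflc eqxx. Qed.

Lemma S_reflc x y : S x y -> reflc x y.
Proof. by rewrite /reflc => ->; rewrite orbT. Qed.

Lemma path_add_edge a b u s : s != [::] -> path (add_edge S a b) u s ->
  S u (last u s) \/ reflc u a && reflc b (last u s).
Proof.
elim: s u => [//|w s IH] u _ /= /andP[e p].
have [Suw | /andP[/eqP ua /eqP wb]] := orP e; last subst u w.
- case: s IH p => [|w' s'] IH p /=; first by left.
  case: (IH w isT p) => [Sw_last | /andP[wa b_last]].
    by left; exact: S_trans Suw Sw_last.
  by right; rewrite (reflc_trans (S_reflc Suw) wa) b_last.
- right; rewrite reflc_refl /=.
  case: s IH p => [|w' s'] IH p /=; first exact: reflc_refl.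
  by case: (IH b isT p) => [/S_reflc | /andP[]] //; apply: reflc_trans.
Qed.

Lemma dcycle_add_edge a b : (forall x, ~~ S x x) ->
  has_dcycle (add_edge S a b) -> reflc b a.
Proof.
move=> S_irr [x [s [s_ne0 xs_path xs_last]]].
case: (path_add_edge s_ne0 xs_path); rewrite xs_last; first by rewrite (negbTE (S_irr x)).
by case/andP=> xa bx; exact: reflc_trans bx xa.
Qed.

End AddEdge.

Lemma minimally_induced_total (P : finType) (S T : rel P) x y :
  minimally_induced S T -> x != y -> T x y -> S x y || S y x.
Proof.
move=> [[[S_irr S_trans] _] S_min] xy Txy.
case Sxy: (S x y) => //=.
have := dcycle_add_edge S_trans S_irr (S_min x y Txy (negbT Sxy)).
by rewrite /reflc eq_sym (negbTE xy).
Qed.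

Lemma minimally_induced_incomparable (P : finType) (S T : rel P) x y :
  minimally_induced S T -> x != y -> incomparable S x y = incomparable T x y.
Proof.
move=> Smin xy; have [[_ ST] _] := Smin.
rewrite /incomparable -!negb_or; congr negb.
apply/idP/idP => [/orP[/ST|/ST] -> //| /orP[Txy|Tyx]]; first by rewrite orbT.
- exact: minimally_induced_total Smin xy Txy.
- by rewrite orbC; apply: minimally_induced_total Smin _ Tyx; rewrite eq_sym.
Qed.

Lemma minimally_induced_antichain (P : finType) (S T : rel P) (A : {set P}) :
  minimally_induced S T -> antichain S A = antichain T A.
Proof.
move=> Smin; apply: eq_forallb_in => x _; apply: eq_forallb_in => y _.
by case: (boolP (x != y)) => //= xy; rewrite (minimally_induced_incomparable Smin xy).
Qed.

Theorem lemma4 (P : finType) (T S : rel P) :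
  transitive_rel T -> minimally_induced S T -> width S = width T.
Proof.
move=> _ Smin; apply: eq_bigl => A.
exact: minimally_induced_antichain Smin.
Qed.
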